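(* Let $F$ be a maximally expressive I-GGNN+ of depth $T=1$ (with injective readout). Let $\mathcal G=(A,X)$ and $\hat{\mathcal G}=(\hat A,\hat X)$ be geometric graphs in $\mathbb{R}^d$ whose adjacency matrices are both the complete graph on $n$ nodes, with $X,\hat X\in\mathbb{R}^{n\times d}$ arbitrary. If $F(\mathcal G)=F(\hat{\mathcal G})$, then there exist a permutation $\pi$ of $\{1,\dots,n\}$, $Q\in O(d)$ and $t\in\mathbb{R}^d$ with $\hat x_{\pi(i)}=Qx_i+t$ for all $i$.
   Context: A geometric graph in $\mathbb{R}^d$ is a pair $(A,X)$, $A\in\{0,1\}^{n\times n}$ symmetric zero-diagonal adjacency matrix, $X\in\mathbb{R}^{n\times d}$ with rows $x_1,\dots,x_n$; $\mathcal N_i=\{j:A_{ij}=1\}$. The complete graph has $A_{ij}=1$ for all $i\neq j$. An I-GGNN+ of depth $T$: all nodes start with the same feature $v_i^{(0)}=v^{(0)}$; for $t=0,\dots,T-1$, $v_i^{(t+1)}=f_t(\{\!\{(v_j^{(t)},x_i-x_j):j\in\mathcal N_i\}\!\})$, where $f_t$ is defined on finite multisets and satisfies $f_t(\{\!\{(v_j,z_j)\}\!\})=f_t(\{\!\{(v_j,Qz_j)\}\!\})$ for all $Q\in O(d)$ (the same $Q$ applied to all relative vectors, not to the features); the output is $\mathrm{ReadOut}(\{\!\{v_1^{(T)},\dots,v_n^{(T)}\}\!\})$. It is maximally expressive if $f_t(\{\!\{(v_j,z_j)\}\!\})=f_t(\{\!\{(\hat v_j,\hat z_j)\}\!\})$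 holds iff there is $Q\in O(d)$ with $\{\!\{(v_j,z_j)\}\!\}=\{\!\{(\hat v_j,Q\hat z_j)\}\!\}$, and $\mathrm{ReadOut}$ is injective on finite multisets. *)

From HB Require Import structures.
From mathcomp Require Import all_boot all_order all_algebra all_fingroup.
From mathcomp Require Import reals.
Set Implicit Arguments. Unset Strict Implicit. Unset Printing Implicit Defensive.
Import Order.TTheory GRing.Theory Num.Theory.
Local Open Scope ring_scope.

Definition orthogonal_mx (R : realType) (d : nat) (Q : 'M[R]_d) : bool :=
  Q *m Q^T == 1%:M.

(* Points / relative vectors of R^d are row vectors; Q acts as z |-> Q z,
   i.e. on rows: z |-> (Q z^T)^T = z Q^T. *)
Definition Oact (R : realType) (d : nat) (Q : 'M[R]_d) (z : 'rV[R]_d) : 'rV[R]_d :=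
  z *m Q^T.

(* Finite multisets are represented by sequences up to perm_eq. *)

Definition is_layer_fun (R : realType) (d : nat) (V W : eqType)
  (f : seq (V * 'rV[R]_d) -> W) : Prop :=
  (forall s s', perm_eq s s' -> f s = f s') /\
  (forall (Q : 'M[R]_d) s, orthogonal_mx Q ->
     f s = f [seq (p.1, Oact Q p.2) | p <- s]).

Definition max_expressive_layer (R : realType) (d : nat) (V W : eqType)
  (f : seq (V * 'rV[R]_d) -> W) : Prop :=
  forall s s', f s = f s' <->
    exists2 Q : 'M[R]_d, orthogonal_mx Q &
      perm_eq s [seq (p.1, Oact Q p.2) | p <- s'].

Definition is_readout (W U : eqType) (r : seq W -> U) : Prop :=
  forall s s', perm_eq s s' -> r s = r s'.

Definition injective_readout (W U : eqType) (r : seq W -> U) : Prop :=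
  forall s s', r s = r s' <-> perm_eq s s'.

Definition complete_adj (n : nat) (A : 'M[bool]_n) : Prop :=
  forall i j : 'I_n, A i j = (i != j).

Definition adjacency (n : nat) (A : 'M[bool]_n) : Prop :=
  (forall i j, A i j = A j i) /\ (forall i, A i i = false).

Definition ggnn1 (R : realType) (d n : nat) (V W U : eqType)
  (v0 : V) (f0 : seq (V * 'rV[R]_d) -> W) (readout : seq W -> U)
  (A : 'M[bool]_n) (X : 'M[R]_(n, d)) : U :=
  readout [seq f0 [seq (v0, row i X - row j X) | j <- enum 'I_n & A i j]
          | i <- enum 'I_n].

From HB Require Import structures.
From mathcomp Require Import all_boot all_order all_algebra all_fingroup.
From mathcomp Require Import reals.
Import Order.TTheory GRing.Theory Num.Theory.
Local Open Scope ring_scope.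

(* Injectivity of the readout turns equal outputs into equal multisets of node
   features, so the feature of node 0 of the first graph is the feature of some
   node k of the second. On a complete graph the message multiset of a node is
   the multiset of its relative vectors to all other nodes, and maximal
   expressivity gives one Q with {{x_0 - x_j}} = Q {{y_k - y_j}}. Adding the
   zero vector to both sides and matching the two full multisets by a
   permutation p gives x_0 - x_j = Q (y_k - y_(p j)), i.e. y_(p j) is x_j moved
   by the rigid motion z |-> Q^T z + (y_k - Q^T x_0). *)

Lemma perm_map_ord_perm {T : eqType} {n} {f g : 'I_n -> T} :
  perm_eq (map f (enum 'I_n)) (map g (enum 'I_n)) ->
  exists p : 'S_n, forall i, f i = g (p i).
Proof.
have map_enum_tuple (h : 'I_n -> T) : map h (enum 'I_n) = [tuple h j | j < n].
  by rewrite -[RHS]map_tnth_enum; apply: eq_map => j; rewrite tnth_mktuple.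
rewrite [map g _]map_enum_tuple => /tuple_permP [p Hp]; exists p => i.
have E : [tuple f j | j < n] = [tuple tnth [tuple g j | j < n] (p j) | j < n].
  by apply: val_inj; rewrite /= -Hp map_enum_tuple.
by have := congr1 (fun t => tnth t i) E; rewrite !tnth_mktuple.
Qed.

Lemma perm_map_enum_rem {T : eqType} {n} (f : 'I_n -> T) i :
  perm_eq (map f (enum 'I_n)) (f i :: map f [seq j <- enum 'I_n | i != j]).
Proof.
have := perm_to_rem (mem_enum predT i).
rewrite rem_filter ?enum_uniq // => /(perm_map f) /= H.
apply: (perm_trans H); rewrite perm_cons; apply/perm_map.
by rewrite (eq_filter (a2 := fun j => i != j)) // => j; rewrite /= eq_sym.
Qed.

Section Orthogonal.

Context {R : realType} {d : nat}.
Implicit Types (Q : 'M[R]_d) (z : 'rV[R]_d).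

Lemma orthogonal_mx_trC Q : orthogonal_mx Q -> Q^T *m Q = 1%:M.
Proof. by move=> /eqP; apply: mulmx1C. Qed.

Lemma orthogonal_mx_tr Q : orthogonal_mx Q -> orthogonal_mx Q^T.
Proof. by move=> HQ; rewrite /orthogonal_mx trmxK orthogonal_mx_trC. Qed.

Lemma OactK Q z : orthogonal_mx Q -> Oact Q z *m Q = z.
Proof. by move=> HQ; rewrite /Oact -mulmxA orthogonal_mx_trC // mulmx1. Qed.

Lemma Oact0 Q : Oact Q 0 = 0.
Proof. exact: mul0mx. Qed.

Lemma congruent_of_rel_vecs {I J : Type} (x : I -> 'rV[R]_d) (y : J -> 'rV[R]_d)
    {p : I -> J} {Q i k} :
  orthogonal_mx Q ->
  (forall j, x i - x j = Oact Q (y k - y (p j))) ->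
  forall j, y (p j) = Oact Q^T (x j) + (y k - Oact Q^T (x i)).
Proof.
move=> HQ Hxy j; have := congr1 (mulmx^~ Q) (Hxy j).
rewrite OactK // mulmxBl /Oact trmxK => E.
have -> : y k = x i *m Q - x j *m Q + y (p j) by rewrite E subrK.
by rewrite addrAC [_ - _ - x i *m Q]addrAC subrr add0r addrA subrr add0r.
Qed.

End Orthogonal.

Section OneLayer.

Context {R : realType} {d n : nat} {V : eqType} (v0 : V).

Definition node_msgs (A : 'M[bool]_n) (X : 'M[R]_(n, d)) (i : 'I_n) :=
  [seq (v0, row i X - row j X) | j <- enum 'I_n & A i j].

Definition rel_vecs (X : 'M[R]_(n, d)) (i : 'I_n) :=
  [seq row i X - row j X | j <- enum 'I_n].

Lemma rel_vecs_complete {A : 'M[bool]_n} X i :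
  complete_adj A ->
  perm_eq (rel_vecs X i) (0 :: map snd (node_msgs A X i)).
Proof.
move=> HA; apply: perm_trans (perm_map_enum_rem (fun j => row i X - row j X) i) _.
rewrite subrr perm_cons -map_comp.
by rewrite (eq_filter (a2 := fun j => i != j)) // => j; rewrite HA.
Qed.

Lemma max_expressive_complete {W : eqType} {f0 : seq (V * 'rV[R]_d) -> W}
    {A Ahat : 'M[bool]_n} {X Xhat i k} :
  max_expressive_layer f0 -> complete_adj A -> complete_adj Ahat ->
  f0 (node_msgs A X i) = f0 (node_msgs Ahat Xhat k) ->
  exists2 Q, orthogonal_mx Q &
    perm_eq (rel_vecs X i) (map (Oact Q) (rel_vecs Xhat k)).
Proof.
move=> Hmax HA HAhat /Hmax [Q HQ Hs]; exists Q => //.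
apply: perm_trans (rel_vecs_complete X i HA) _.
rewrite perm_sym.
apply: perm_trans (perm_map (Oact Q) (rel_vecs_complete Xhat k HAhat)) _.
rewrite perm_sym /= Oact0 perm_cons -map_comp.
by move: (perm_map snd Hs); rewrite -!map_comp.
Qed.

End OneLayer.

Theorem mainTheorem6 (R : realType) (d n : nat) (V W U : eqType)
  (v0 : V) (f0 : seq (V * 'rV[R]_d) -> W) (readout : seq W -> U)
  (Hf0 : is_layer_fun f0) (Hmax : max_expressive_layer f0)
  (Hr : is_readout readout) (Hrinj : injective_readout readout)
  (A Ahat : 'M[bool]_n) (X Xhat : 'M[R]_(n, d))
  (HA : complete_adj A) (HAhat : complete_adj Ahat) :
  ggnn1 v0 f0 readout A X = ggnn1 v0 f0 readout Ahat Xhat ->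
  exists (pi : 'S_n) (Q : 'M[R]_d) (t : 'rV[R]_d),
    orthogonal_mx Q /\
    forall i : 'I_n, row (pi i) Xhat = Oact Q (row i X) + t.
Proof.
case: n A Ahat X Xhat HA HAhat => [|m] A Ahat X Xhat HA HAhat /Hrinj Hfeat.
  by exists 1%g, 1%:M, 0; split=> [|[] //]; rewrite /orthogonal_mx trmx1 mulmx1.
have : f0 (node_msgs v0 A X ord0) \in
    [seq f0 (node_msgs v0 Ahat Xhat k) | k <- enum 'I_m.+1].
  by rewrite -(perm_mem Hfeat); apply: map_f; rewrite mem_enum.
case/mapP=> k _ /(max_expressive_complete v0 Hmax HA HAhat) [Q HQ Hrel].
move: Hrel; rewrite /rel_vecs -[map (Oact Q) _]map_comp => /perm_map_ord_perm [p Hp].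
exists p, Q^T, (row k Xhat - Oact Q^T (row ord0 X)).
split; first exact: orthogonal_mx_tr.
exact: (congruent_of_rel_vecs (fun j => row j X) (fun j => row j Xhat) HQ Hp).
Qed.
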